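(* Let $n \ge r \ge 1$, let $\bm U^\star \in \mathbb{R}^{n\times r}$ have rows $\bm u_1^\star,\dots,\bm u_n^\star\in\mathbb{R}^r$, let $\bm M = \bm U^\star\bm U^{\star T}$ (noiseless case), let $\Omega = \{(i,j)\in[n]\times[n]: m_{ij}\ge 0\}$, and let $F(\bm U) = \frac14\|(\bm U\bm U^T - \bm M)_\Omega\|_F^2$ for $\bm U\in\mathbb{R}^{n\times r}$. Let $\mathcal{C}_1,\dots,\mathcal{C}_{2^r}$ be the orthants of $\mathbb{R}^r$, ordered so that consecutive orthants $\mathcal{C}_i,\mathcal{C}_{i+1}$ have sign patterns differing in exactly one coordinate. Suppose $[n]$ is partitioned into $J_1,\dots,J_{2^r}$ with $\bm u_k^\star\in\mathcal{C}_i$ for all $k\in J_i$, let $\bm U_i^\star$ be the submatrix of rows of $\bm U^\star$ indexed by $J_i$, and assume: (1) $\mathrm{rank}(\bm U_i^\star)=r$ for all $i\in[2^r]$; (2) for every $i\in[2^r-1]$, with $\Omega_{i+1,i}=\{(k,l)\in J_{i+1}\times J_i: \bm u_k^{\star T}\bm u_l^\star\ge 0\}$, we have $|\Omega_{i+1,i}|\ge r^2$ and $\mathrm{span}\{\bm u_k^\star\bm u_l^{\star T}:(k,l)\in\Omega_{i+1,i}\} = \mathbb{R}^{r\times r}$. Define $$\gamma := \min\left\{ \|(\bm U^\star\bm D^T + \bm D\bm U^{\star T})_\Omega\|_F^2 \;:\; \bm D\in\mathcal{S}^\perp_{\bm U^\star},\ \|\bm D\|_F = 1\right\}.$$ Then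 $\gamma>0$, and $F$ is geodesically strongly convex on the quotient manifold $\mathcal{M}$ at $[\bm U^\star]$: for every tangent vector $\bm\xi\in \mathrm{T}_{[\bm U^\star]}\mathcal{M}$, $$\mathrm{Hess}\,F([\bm U^\star])[\bm\xi,\bm\xi] \ge \frac{\gamma}{2}\,\|\mathrm{lift}_{\bm U^\star}(\bm\xi)\|_F^2,$$ equivalently $\nabla^2F(\bm U^\star)[\bm D,\bm D]\ge \frac{\gamma}{2}\|\bm D\|_F^2$ for every $\bm D\in\mathcal{S}^\perp_{\bm U^\star}$.
   Context: $(\bm A)_\Omega$ keeps the entries of $\bm A$ in $\Omega$ and zeroes the rest. The quotient manifold is $\mathcal{M}=\mathbb{R}^{n\times r}/\sim$, where $\bm V\sim\bm U$ iff $\bm V=\bm U\bm Q$ for some orthogonal $\bm Q\in\mathbb{R}^{r\times r}$; $[\bm U]$ is the equivalence class. The vertical space at $\bm U$ is $\mathcal{S}_{\bm U}=\{\bm U\bm R: \bm R\in\mathbb{R}^{r\times r},\ \bm R+\bm R^T=\bm 0\}$ and the horizontal space is its orthogonal complement $\mathcal{S}^\perp_{\bm U}=\{\bm D\in\mathbb{R}^{n\times r}: \bm U^T\bm D = \bm D^T\bm U\}$. The map $\mathrm{lift}_{\bm U}:\mathrm{T}_{[\bm U]}\mathcal{M}\to\mathcal{S}^\perp_{\bm U}$ is the standard bijection between tangent vectors of the quotient and horizontal vectors, and the Riemannian Hessian is given by $\mathrm{Hess}\,F([\bm U])[\bm\xi,\bm\xi] = \nabla^2F(\bm U)[\mathrm{lift}_{\bm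 U}(\bm\xi),\mathrm{lift}_{\bm U}(\bm\xi)]$, where $\nabla^2F(\bm U)[\bm D,\bm D]$ is the Euclidean Hessian quadratic form of $F$ at $\bm U$ in direction $\bm D$. *)

From HB Require Import structures.
From mathcomp Require Import all_boot all_order all_algebra.
From mathcomp Require Import all_classical all_reals all_analysis.
Set Implicit Arguments. Unset Strict Implicit. Unset Printing Implicit Defensive.
Import Order.TTheory GRing.Theory Num.Theory.
Local Open Scope ring_scope.

Section Defs.
Variable R : realType.

Definition frob2 m p (A : 'M[R]_(m, p)) : R := \sum_i \sum_j (A i j) ^+ 2.

Definition maskOmega m (M A : 'M[R]_m) : 'M[R]_m :=
  \matrix_(i, j) (if 0 <= M i j then A i j else 0).

Definition Fobj n r (M : 'M[R]_n) (U : 'M[R]_(n, r)) : R :=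
  4^-1 * frob2 (maskOmega M (U *m U^T - M)).

Definition hessq n r (f : 'M[R]_(n, r) -> R) (U D : 'M[R]_(n, r)) : R :=
  derive1n 2 (fun t : R => f (U + t *: D)) 0.

Definition horizontal n r (U D : 'M[R]_(n, r)) : Prop := U^T *m D = D^T *m U.

Definition in_orthant r (s : {ffun 'I_r -> bool}) (x : 'rV[R]_r) : Prop :=
  forall j, if s j then 0 <= x 0 j else x 0 j <= 0.

Definition rowsub_set n r (J : {set 'I_n}) (U : 'M[R]_(n, r)) : 'M[R]_(#|J|, r) :=
  rowsub (fun k : 'I_#|J| => enum_val k) U.

Definition outer n r (U : 'M[R]_(n, r)) (k l : 'I_n) : 'M[R]_r :=
  (row k U)^T *m row l U.


Definition gamma n r (M : 'M[R]_n) (U : 'M[R]_(n, r)) : R :=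
  inf [set frob2 (maskOmega M (U *m D^T + D *m U^T)) |
       D in [set D : 'M[R]_(n, r) | horizontal U D /\ frob2 D = 1]]%classic.

End Defs.

From HB Require Import structures.
From mathcomp Require Import all_boot all_order all_algebra.
From mathcomp Require Import all_classical all_reals all_analysis.
From mathcomp Require Import ring lra.
Import Order.TTheory GRing.Theory Num.Theory.
Local Open Scope ring_scope.
Set Implicit Arguments. Unset Strict Implicit. Unset Printing Implicit Defensive.

(* In the noiseless case the Hessian of F at U* in a direction D equals
   (1/2) ||(U* D^T + D U*^T)_Omega||^2, so everything reduces to showing that the
   linear map D |-> (U* D^T + D U*^T)_Omega is injective on the horizontal space:
   an injective linear map between finite-dimensional spaces is bounded below, and
   that bound is a positive lower bound for gamma.
   Injectivity: two rows in the same block J_i lie in the same orthant, so their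
   inner product is nonnegative and the whole block J_i x J_i lies in Omega.  Since
   U*_i has rank r, vanishing there forces D_i = U*_i S_i with S_i skew.  On
   Omega_{i+1,i} the vanishing entries say u_k^T (S_{i+1} - S_i) u_l = 0, and the
   spanning hypothesis gives S_{i+1} = S_i.  Hence D = U* S with S skew, and then
   horizontality gives ||D||^2 = - ||D||^2. *)

Section FrobeniusNorm.
Variable R : realType.

Lemma frob2E m p (A : 'M[R]_(m, p)) : frob2 A = \tr (A *m A^T).
Proof.
rewrite /frob2 /mxtrace; apply: eq_bigr => i _; rewrite mxE.
by apply: eq_bigr => j _; rewrite !mxE expr2.
Qed.

Lemma frob2_pair m p (A : 'M[R]_(m, p)) :
  frob2 A = \sum_(k : 'I_m * 'I_p) A k.1 k.2 ^+ 2.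
Proof. by rewrite /frob2 pair_bigA. Qed.

Lemma frob2_ge0 m p (A : 'M[R]_(m, p)) : 0 <= frob2 A.
Proof. by apply: sumr_ge0 => i _; apply: sumr_ge0 => j _; apply: sqr_ge0. Qed.

Lemma frob2_eq0 m p (A : 'M[R]_(m, p)) : frob2 A = 0 -> A = 0.
Proof.
rewrite frob2_pair => /(psumr_eq0P (fun k _ => sqr_ge0 (A k.1 k.2))) A0.
by apply/matrixP => i j; apply/eqP; rewrite mxE -sqrf_eq0 (A0 (i, j)).
Qed.

Lemma frob2Z m p a (A : 'M[R]_(m, p)) : frob2 (a *: A) = a ^+ 2 * frob2 A.
Proof.
rewrite /frob2 mulr_sumr; apply: eq_bigr => i _; rewrite mulr_sumr.
by apply: eq_bigr => j _; rewrite mxE exprMn.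
Qed.

Lemma frob2N m p (A : 'M[R]_(m, p)) : frob2 (- A) = frob2 A.
Proof. by rewrite -scaleN1r frob2Z sqrrN expr1n mul1r. Qed.

Lemma frob2_tr m p (A : 'M[R]_(m, p)) : frob2 A^T = frob2 A.
Proof. by rewrite !frob2E trmxK mxtrace_mulC. Qed.

Lemma frob2_block_mx m1 m2 p1 p2 (A : 'M[R]_(m1, p1)) :
  frob2 (block_mx A 0 0 (0 : 'M[R]_(m2, p2))) = frob2 A.
Proof.
rewrite /frob2 big_split_ord /= [X in _ + X]big1 ?addr0 => [|i _].
  apply: eq_bigr => i _; rewrite big_split_ord /= [X in _ + X]big1 ?addr0 => [|j _].
    by apply: eq_bigr => j _; rewrite block_mxEul.
  by rewrite block_mxEur mxE expr0n.
by rewrite big_split_ord /= !big1 ?addr0 // => j _;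
  rewrite ?block_mxEdl ?block_mxEdr mxE expr0n.
Qed.

Lemma cauchy_schwarz (I : finType) (a b : I -> R) :
  (\sum_i a i * b i) ^+ 2 <= (\sum_i a i ^+ 2) * (\sum_i b i ^+ 2).
Proof.
pose A := \sum_i a i ^+ 2; pose B := \sum_i b i ^+ 2; pose C := \sum_i a i * b i.
have lagrange_id : \sum_i \sum_j (a i * b j - a j * b i) ^+ 2 = 2 * (A * B - C ^+ 2).
  have sum_j i : \sum_j (a i * b j - a j * b i) ^+ 2 =
      a i ^+ 2 * B + b i ^+ 2 * A - 2 * (a i * b i) * C.
    rewrite /A /B /C !mulr_sumr -!big_split -sumrB /=.
    by apply: eq_bigr => j _; ring.
  under eq_bigr do rewrite sum_j.
  by rewrite sumrB big_split /= -!mulr_suml -mulr_sumr -/A -/B -/C; ring.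
have : 0 <= \sum_i \sum_j (a i * b j - a j * b i) ^+ 2.
  by apply: sumr_ge0 => i _; apply: sumr_ge0 => j _; apply: sqr_ge0.
by rewrite lagrange_id -/A -/B -/C; lra.
Qed.

Lemma linear_frob2_le m1 m2 p q (f : {linear 'M[R]_(p, q) -> 'M[R]_(m1, m2)}) :
  exists2 C, 0 <= C & forall y, frob2 (f y) <= C * frob2 y.
Proof.
pose e (k : 'I_p * 'I_q) := delta_mx k.1 k.2 : 'M[R]_(p, q).
exists (\sum_k frob2 (f (e k))) => [|y]; first by apply: sumr_ge0 => k _; apply: frob2_ge0.
have -> : f y = \sum_k y k.1 k.2 *: f (e k).
  rewrite {1}(matrix_sum_delta y) pair_bigA linear_sum.
  by apply: eq_bigr => k _; rewrite linearZ.
rewrite mulrC; set Y := frob2 y; rewrite mulr_sumr /frob2.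
under [in leRHS]eq_bigr do rewrite mulr_sumr.
rewrite [in leRHS]exchange_big; apply: ler_sum => i _.
under [in leRHS]eq_bigr do rewrite mulr_sumr.
rewrite [in leRHS]exchange_big; apply: ler_sum => j _.
rewrite summxE (eq_bigr (fun k => y k.1 k.2 * f (e k) i j)) => [|k _]; last by rewrite mxE.
by rewrite -mulr_sumr /Y frob2_pair; apply: cauchy_schwarz.
Qed.

Lemma inj_linear_frob2_ge m1 m2 p q (f : {linear 'M[R]_(m1, m2) -> 'M[R]_(p, q)}) :
  injective f -> exists2 c, 0 < c & forall x, c * frob2 x <= frob2 (f x).
Proof.
move=> f_inj; have ker0 : lker (linfun f) == 0%VS.
  by apply/lker0P => x y; rewrite !lfunE; apply: f_inj.
have [C C_ge0 fVC] := linear_frob2_le ((linfun f)^-1)%VF.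
exists (C + 1)^-1 => [|x]; first by rewrite invr_gt0; lra.
rewrite ler_pdivrMl; last by lra.
have fK := lker0_lfunK ker0 x; rewrite lfunE /= in fK.
have fxC : frob2 x <= C * frob2 (f x) by rewrite -{1}fK; apply: fVC.
by apply: (le_trans fxC); apply: ler_wpM2r; [exact: frob2_ge0 | lra].
Qed.

End FrobeniusNorm.

Section Hessian.
Variable R : realType.

Definition mask_symprod n r (U D : 'M[R]_(n, r)) : 'M[R]_n :=
  maskOmega (U *m U^T) (U *m D^T + D *m U^T).

Lemma mask_symprod_is_linear n r (U : 'M[R]_(n, r)) : linear (mask_symprod U).
Proof.
move=> a D1 D2; rewrite /mask_symprod.
have -> : U *m (a *: D1 + D2)^T + (a *: D1 + D2) *m U^T =
    a *: (U *m D1^T + D1 *m U^T) + (U *m D2^T + D2 *m U^T).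
  by rewrite linearD linearZ /= mulmxDr mulmxDl -scalemxAr -scalemxAl scalerDr addrACA.
by apply/matrixP => i j; rewrite !mxE; case: ifP => _ //; rewrite mulr0 addr0.
Qed.

HB.instance Definition _ n r (U : 'M[R]_(n, r)) :=
  GRing.isLinear.Build R 'M[R]_(n, r) 'M[R]_n *:%R (mask_symprod U)
    (mask_symprod_is_linear U).

Lemma mask_symprod_eq0_entry n r (U D : 'M[R]_(n, r)) k l :
  mask_symprod U D = 0 -> 0 <= (U *m U^T) k l -> (U *m D^T + D *m U^T) k l = 0.
Proof. by move=> /matrixP/(_ k l); rewrite !mxE => + Ukl; rewrite Ukl. Qed.

Lemma gram_shiftE n r (U D : 'M[R]_(n, r)) t :
  (U + t *: D) *m (U + t *: D)^T - U *m U^T =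
  t *: (U *m D^T + D *m U^T) + t ^+ 2 *: (D *m D^T).
Proof.
apply/matrixP => i j; rewrite !mxE mulrDr !mulr_sumr -!big_split -sumrB /=.
by apply: eq_bigr => k _; rewrite !mxE; ring.
Qed.

Lemma deriv2_mulX2_horner0 (Q : {poly R}) : (('X^2 * Q)^`())^`().[0] = 2 * Q.[0].
Proof.
rewrite expr2 !(derivM, derivD, derivX, mul1r, mulr1).
by rewrite !(hornerD, hornerM, hornerX, hornerC); ring.
Qed.

Lemma hessq_Fobj_gram n r (U D : 'M[R]_(n, r)) :
  hessq (Fobj (U *m U^T)) U D = 2^-1 * frob2 (mask_symprod U D).
Proof.
set M := U *m U^T; set B := U *m D^T + D *m U^T; set C := D *m D^T.
pose mask_sq (i j : 'I_n) (p : {poly R}) := if 0 <= M i j then p ^+ 2 else 0.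
pose Q := (4^-1)%:P * \sum_i \sum_j mask_sq i j ((B i j)%:P + 'X * (C i j)%:P).
have mask_sq0 i j p : (mask_sq i j p).[0] = if 0 <= M i j then p.[0] ^+ 2 else 0.
  by rewrite /mask_sq; case: ifP; rewrite ?horner0 // horner_exp.
have FQ : (fun t => Fobj M (U + t *: D)) = horner ('X ^+ 2 * Q).
  apply/funext => t; rewrite /Fobj /frob2 gram_shiftE hornerM hornerXn hornerCM.
  rewrite mulrCA; congr (_ * _); rewrite horner_sum mulr_sumr; apply: eq_bigr => i _.
  rewrite horner_sum mulr_sumr; apply: eq_bigr => j _.
  rewrite /mask_sq !mxE; case: ifP => _; last by rewrite horner0 expr0n mulr0.
  by rewrite horner_exp !(hornerD, hornerM, hornerX, hornerC); ring.
rewrite /hessq FQ /derive1n /= -!derivE deriv2_mulX2_horner0 hornerCM horner_sum.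
rewrite mulrA (_ : 2 * 4^-1 = 2^-1 :> R); last by field.
congr (_ * _); apply: eq_bigr => i _; rewrite horner_sum; apply: eq_bigr => j _.
rewrite mask_sq0 [mask_symprod U D i j]mxE; case: ifP => _; last by rewrite expr0n.
by rewrite !(hornerD, hornerM, hornerX, hornerC) mul0r addr0.
Qed.

End Hessian.

Section SkewFactors.
Variable R : realType.

Lemma mulmx_trE m p q (A : 'M[R]_(m, p)) (B : 'M[R]_(q, p)) k l :
  (A *m B^T) k l = (row k A *m (row l B)^T) 0 0.
Proof. by rewrite !mxE; apply: eq_bigr => c _; rewrite !mxE. Qed.

Lemma symprod_eq0_skew m r (U D : 'M[R]_(m, r)) :
  row_full U -> U *m D^T + D *m U^T = 0 ->
  exists2 S : 'M[R]_r, S^T = - S & D = U *m S.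
Proof.
case/row_fullP=> A AU1 UD0.
have skewS : (A *m D)^T = - (A *m D).
  have := congr1 (fun X => A *m X *m A^T) UD0.
  rewrite mulmxDr mulmxDl !mulmxA AU1 mul1mx.
  rewrite -[X in _ + X = _]mulmxA -[U^T *m A^T]trmx_mul AU1.
  by rewrite trmx1 mulmx1 mulmx0 mul0mx -trmx_mul => /eqP; rewrite addr_eq0 => /eqP.
exists (A *m D) => //.
have := congr1 (fun X => X *m A^T) UD0.
rewrite mulmxDl mul0mx -!mulmxA -[U^T *m A^T]trmx_mul AU1 trmx1 mulmx1 -trmx_mul.
by move/eqP; rewrite addrC addr_eq0 => /eqP {1}->; rewrite skewS mulmxN opprK.
Qed.

Lemma orth_span_eq0 m p (s : seq 'M[R]_(m, p)) (T : 'M[R]_(m, p)) :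
  (<< s >> = fullv)%VS -> {in s, forall X, \tr (X *m T^T) = 0} -> T = 0.
Proof.
move=> s_full sT0; apply: frob2_eq0; rewrite frob2E.
have /coord_span {1}-> : T \in <<in_tuple s>>%VS by rewrite s_full memvf.
rewrite mulmx_suml linear_sum big1 // => j _.
by rewrite -scalemxAl linearZ /= sT0 ?mulr0 // mem_nth.
Qed.

Lemma horizontal_skew_eq0 n r (U : 'M[R]_(n, r)) (S : 'M[R]_r) :
  S^T = - S -> horizontal U (U *m S) -> U *m S = 0.
Proof.
rewrite /horizontal => skewS horUS; apply: frob2_eq0.
(* With G := U^T U, horizontality reads G S = - S G, so
   ||U S||^2 = tr (S^T G S) = - tr (S^T S G) = - ||U S||^2. *)
have GS : U^T *m U *m S = - (S *m (U^T *m U)).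
  by rewrite -mulmxA horUS trmx_mul -mulmxA skewS mulNmx.
have E1 : frob2 (U *m S) = \tr (S^T *m (U^T *m U *m S)).
  by rewrite -frob2_tr frob2E trmxK trmx_mul !mulmxA.
have E2 : \tr (S^T *m (S *m (U^T *m U))) = frob2 (U *m S).
  rewrite -(frob2N (U *m S)) -mulmxN -skewS frob2E trmx_mul trmxK.
  by rewrite !mulmxA mxtrace_mulC !mulmxA.
suff : frob2 (U *m S) = - frob2 (U *m S) by lra.
by rewrite {1}E1 GS mulmxN linearN /= E2.
Qed.

End SkewFactors.

Section OrthantBlocks.
Variables (R : realType) (n r N : nat) (U : 'M[R]_(n, r)).
Variables (part : 'I_n -> 'I_N) (sigma : 'I_N -> {ffun 'I_r -> bool}).
Hypothesis U_orthant : forall k, in_orthant (sigma (part k)) (row k U).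
Hypothesis U_block_rank : forall i, \rank (rowsub_set [set k | part k == i] U) = r.

Definition cross_omega (i' i : 'I_N) : {set 'I_n * 'I_n} :=
  [set p | [&& part p.1 == i', part p.2 == i & 0 <= (row p.1 U *m (row p.2 U)^T) 0 0]].

Lemma gram_ge0_same_part k l : part k = part l -> 0 <= (U *m U^T) k l.
Proof.
move=> kl; rewrite mxE; apply: sumr_ge0 => j _; rewrite mxE.
have := U_orthant k j; have := U_orthant l j; rewrite !mxE kl.
by case: (sigma (part l) j) => Ulj Ukj; [apply: mulr_ge0 | apply: mulr_le0].
Qed.

Lemma block_skew_factor i (D : 'M[R]_(n, r)) : mask_symprod U D = 0 ->
  exists2 S : 'M[R]_r, S^T = - S & forall k, part k = i -> row k D = row k U *m S.
Proof.
move=> D0; set J := [set k | part k == i].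
have same_part (a b : 'I_#|J|) : part (enum_val a) = part (enum_val b).
  by have := enum_valP a; have := enum_valP b; rewrite !inE => /eqP -> /eqP ->.
have UJ_full : row_full (rowsub_set J U) by apply/eqP; apply: U_block_rank.
have UDJ0 : rowsub_set J U *m (rowsub_set J D)^T + rowsub_set J D *m (rowsub_set J U)^T = 0.
  apply/matrixP => a b; rewrite [RHS]mxE.
  rewrite -(mask_symprod_eq0_entry D0 (gram_ge0_same_part (same_part a b))) !mxE.
  by congr (_ + _); apply: eq_bigr => c _; rewrite !mxE.
have [S skewS DS] := symprod_eq0_skew UJ_full UDJ0.
exists S => // k ki; have kJ : k \in J by rewrite inE ki.
have := congr1 (row (enum_rank_in kJ k)) DS.
by rewrite row_mul !row_rowsub enum_rankK_in.
Qed.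

Lemma cross_skew_factor_eq i i' (D : 'M[R]_(n, r)) (S S' : 'M[R]_r) :
  mask_symprod U D = 0 -> S^T = - S ->
  (forall k, part k = i -> row k D = row k U *m S) ->
  (forall k, part k = i' -> row k D = row k U *m S') ->
  (<< [seq outer U p.1 p.2 | p <- enum (cross_omega i' i)] >> = fullv)%VS ->
  S' = S.
Proof.
move=> D0 skewS DS DS' span_full; apply/eqP; rewrite -subr_eq0; apply/eqP.
apply: (orth_span_eq0 span_full) => _ /mapP [[k l] + ->].
rewrite mem_enum inE /= => /and3P [/eqP ki' /eqP li Ukl].
have Ukl' : 0 <= (U *m U^T) k l by rewrite mulmx_trE.
(* The (k, l) entry of U D^T + D U^T is u_k^T (S' - S) u_l, the pairing of
   u_k u_l^T with S' - S. *)
have := mask_symprod_eq0_entry D0 Ukl'.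
rewrite mxE (mulmx_trE U D) (mulmx_trE D U) (DS' k ki') (DS l li).
rewrite trmx_mul skewS mulNmx mulmxN mulmxA [X in X + _]mxE addrC => uTu0.
rewrite /outer -mulmxA mxtrace_mulC.
have -> : row l U *m (S' - S)^T *m (row k U)^T = (row k U *m (S' - S) *m (row l U)^T)^T.
  by rewrite !trmx_mul trmxK mulmxA.
by rewrite /mxtrace big_ord1 mxE mulmxBr mulmxBl [LHS]mxE -uTu0 [X in _ + X]mxE.
Qed.

Hypothesis cross_span : forall i i' : 'I_N, i' = i.+1 :> nat ->
  (<< [seq outer U p.1 p.2 | p <- enum (cross_omega i' i)] >> = fullv)%VS.

Lemma horizontal_mask_symprod_eq0 (D : 'M[R]_(n, r)) :
  (0 < N)%N -> horizontal U D -> mask_symprod U D = 0 -> D = 0.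
Proof.
move=> N_gt0 horD D0.
have [Sf skewSf DSf] := fin_all_exists2 (fun i => block_skew_factor i D0).
have Sf_const i : Sf i = Sf (Ordinal N_gt0).
  case: i => m; elim: m => [|m IHm] m_lt; first by congr Sf; apply: val_inj.
  rewrite -(IHm (ltnW m_lt)).
  apply: (cross_skew_factor_eq D0 (skewSf _) (DSf _) (DSf _)).
  exact: (cross_span (i := Ordinal (ltnW m_lt)) (i' := Ordinal m_lt)).
have DUS : D = U *m Sf (Ordinal N_gt0).
  by apply/row_matrixP => k; rewrite row_mul -(Sf_const (part k)); apply: DSf.
by rewrite DUS horizontal_skew_eq0 // -DUS.
Qed.

End OrthantBlocks.

Section LowerBound.
Variable R : realType.

(* Appending the defect U^T D - D^T U from horizontality makes the map injective
   on all of 'M_(n, r), not only on the horizontal space. *)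
Definition symprod_horiz n r (U D : 'M[R]_(n, r)) : 'M[R]_(n + r) :=
  block_mx (mask_symprod U D) 0 0 (U^T *m D - D^T *m U).

Lemma symprod_horiz_is_linear n r (U : 'M[R]_(n, r)) : linear (symprod_horiz U).
Proof.
move=> a D1 D2; rewrite /symprod_horiz scale_block_mx add_block_mx !scaler0 !addr0 linearP.
congr block_mx; rewrite linearP [(_ + _)^T]linearP /= mulmxDl -scalemxAl.
by rewrite scalerBr opprD addrACA.
Qed.

HB.instance Definition _ n r (U : 'M[R]_(n, r)) :=
  GRing.isLinear.Build R 'M[R]_(n, r) 'M[R]_(n + r) *:%R (symprod_horiz U)
    (symprod_horiz_is_linear U).

Lemma horizontalZ n r (U D : 'M[R]_(n, r)) a : horizontal U D -> horizontal U (a *: D).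
Proof. by rewrite /horizontal => UD; rewrite -scalemxAr linearZ -scalemxAl UD. Qed.

Lemma frob2_normalize m p (A : 'M[R]_(m, p)) :
  frob2 A != 0 -> frob2 ((Num.sqrt (frob2 A))^-1 *: A) = 1.
Proof. by move=> A_neq0; rewrite frob2Z exprVn sqr_sqrtr ?frob2_ge0 ?mulVf. Qed.

Lemma mask_symprod_frob2_ge n r (U : 'M[R]_(n, r)) :
  (forall D, horizontal U D -> mask_symprod U D = 0 -> D = 0) ->
  exists2 c, 0 < c & forall D, horizontal U D -> c * frob2 D <= frob2 (mask_symprod U D).
Proof.
move=> U_inj; have /inj_linear_frob2_ge [c c_gt0 c_le] : injective (symprod_horiz U).
  apply: raddf_inj => D; rewrite /symprod_horiz -(block_mx0 _ n r).
  by case/eq_block_mx => D0 _ _ /eqP; rewrite subr_eq0 => /eqP/U_inj; apply.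
exists c => // D horD; have : c * frob2 D <= frob2 (symprod_horiz U D) := c_le D.
by rewrite /symprod_horiz horD subrr frob2_block_mx.
Qed.

Lemma gamma_mul_frob2_le n r (U D : 'M[R]_(n, r)) :
  horizontal U D -> gamma (U *m U^T) U * frob2 D <= frob2 (mask_symprod U D).
Proof.
move=> horD; have [D0|D_neq0] := eqVneq (frob2 D) 0.
  by rewrite D0 mulr0 frob2_ge0.
set s := (Num.sqrt (frob2 D))^-1.
have : gamma (U *m U^T) U <= frob2 (mask_symprod U (s *: D)).
  apply: ge_inf; first by exists 0 => _ [D' _ <-]; apply: frob2_ge0.
  by exists (s *: D) => //; split; [apply: horizontalZ | apply: frob2_normalize].
rewrite linearZ frob2Z /s exprVn sqr_sqrtr ?frob2_ge0 // -ler_pdivlMr; last first.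
  by rewrite lt_def D_neq0 frob2_ge0.
by rewrite mulrC.
Qed.

Lemma gamma_ge n r (U : 'M[R]_(n, r)) c : U != 0 ->
  (forall D, horizontal U D -> c * frob2 D <= frob2 (mask_symprod U D)) ->
  c <= gamma (U *m U^T) U.
Proof.
move=> U_neq0 c_le; apply: lb_le_inf.
  have U_nrm : frob2 U != 0 by apply: contra_neq U_neq0; apply: frob2_eq0.
  exists (frob2 (mask_symprod U ((Num.sqrt (frob2 U))^-1 *: U))).
  exists ((Num.sqrt (frob2 U))^-1 *: U) => //.
  by split; [exact: horizontalZ | exact: frob2_normalize].
by move=> _ [D [horD D1] <-]; have := c_le D horD; rewrite D1 mulr1.
Qed.

End LowerBound.

Unset Implicit Arguments.
Set Strict Implicit.

Theorem theorem3p5 (R : realType) (n r : nat) (Ustar : 'M[R]_(n, r))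
  (sigma : 'I_(2 ^ r) -> {ffun 'I_r -> bool})
  (part : 'I_n -> 'I_(2 ^ r)) :
  (1 <= r <= n)%N ->
  (* C_1, ..., C_{2^r} enumerate all orthants (injectively) ... *)
  injective sigma ->
  (* ... and consecutive orthants differ in exactly one sign *)
  (forall i i' : 'I_(2 ^ r), nat_of_ord i' = i.+1 ->
     #|[set j | sigma i j != sigma i' j]| = 1%N) ->
  (* J_i = part^-1(i) partition [n], with u*_k in C_i for k in J_i *)
  (forall k : 'I_n, in_orthant (sigma (part k)) (row k Ustar)) ->
  (* (1) rank(U*_i) = r *)
  (forall i : 'I_(2 ^ r),
     \rank (rowsub_set [set k | part k == i] Ustar) = r) ->
  (* (2) |Omega_{i+1,i}| >= r^2 and span{u*_k u*_l^T : (k,l) in Omega_{i+1,i}} = R^{r x r} *)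
  (forall i i' : 'I_(2 ^ r), nat_of_ord i' = i.+1 ->
     let Om := [set p : 'I_n * 'I_n | [&& part p.1 == i', part p.2 == i &
                   0 <= (row p.1 Ustar *m (row p.2 Ustar)^T) 0 0]] in
     (r ^ 2 <= #|Om|)%N /\
     (<< [seq outer Ustar p.1 p.2 | p <- enum Om] >>)%VS = fullv) ->
  let M := Ustar *m Ustar^T in
  0 < gamma M Ustar /\
  (forall D : 'M[R]_(n, r), horizontal Ustar D ->
     hessq (Fobj M) Ustar D >= gamma M Ustar / 2 * frob2 D).
Proof.
move=> /andP[r_gt0 _] _ _ U_orthant U_rank cross_span M.
have parts_gt0 : (0 < 2 ^ r)%N by rewrite expn_gt0.
have U_neq0 : Ustar != 0.
  apply: contraTneq r_gt0 => U0; rewrite -leqNgt -(U_rank (Ordinal parts_gt0)).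
  by apply: leq_trans (mxrankS (rowsub_sub _ _)) _; rewrite U0 mxrank0.
have [c c_gt0 c_le] : exists2 c, 0 < c & forall D, horizontal Ustar D ->
    c * frob2 D <= frob2 (mask_symprod Ustar D).
  apply: mask_symprod_frob2_ge => D.
  apply: (horizontal_mask_symprod_eq0 U_orthant U_rank _ parts_gt0) => i i' ii'.
  exact: (cross_span i i' ii').2.
split=> [|D horD]; first exact: lt_le_trans c_gt0 (gamma_ge U_neq0 c_le).
rewrite hessq_Fobj_gram mulrAC mulrC.
by apply: ler_wpM2l; [rewrite invr_ge0 | apply: gamma_mul_frob2_le].
Qed.
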